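(* Let $d\ge 1$ and $1\le e\le d$ be integers, let $I\subset\mathbb{Z}^e$ be a finite index set with cardinality $|I|$, and let $\delta>0$. Let $$D^\delta_I:=\left\{x=(x_i)_{i\in I}\in\left([0,1]^d\right)^I:\ \Vert x_i-x_j\Vert\ge\delta \text{ whenever } i\neq j\right\},$$ where $\Vert\cdot\Vert$ is the Euclidean norm. For $x=(x_i)_{i\in I}\in([0,1]^d)^I$ and $i\in I$, let $C_i(x)$ denote the Voronoi cell $$C_i(x):=\left\{\omega\in[0,1]^d:\ \Vert x_i-\omega\Vert<\Vert x_k-\omega\Vert \text{ for all } k\neq i\right\},$$ where points $\omega$ equidistant from several nearest centroids are assigned to exactly one of the corresponding cells according to the lexicographical order on $I$ (so that $(C_i(x))_{i\in I}$ is a partition of $[0,1]^d$). Let $\lambda$ be the Lebesgue measure on $[0,1]^d$ and $E^c$ the complement of $E$ in $[0,1]^d$. For $0<\alpha<\delta/2$, $x\in D^\delta_I$ and $i\in I$, let $$U^\alpha_i(x)=\left\{\omega\in[0,1]^d:\ \exists\, y\in D^\delta_I \text{ with } y_j=x_j \text{ for all } j\neq i,\ \Vert x_i-y_i\Vert<\alpha,\ \text{and } \omega\in C_i(y)^c\cap C_i(x)\right\}.$$ Then $$\sup_{x\in D^\delta_I}\lambda\left(U^\alpha_i(x)\right)<\left(|I|-1\right)\left(\frac{2\alpha}{\delta}+\alpha\right)\left(\sqrt{2}\right)^{d-1}.$$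
   Context: $U^\alpha_i(x)$ is the set of points that leave the Voronoi cell of unit $i$ when the centroid $x_i$ alone is moved by less than $\alpha$ (staying in $D^\delta_I$). *)

From HB Require Import structures.
From mathcomp Require Import all_boot all_order all_algebra.
From mathcomp Require Import all_classical all_reals all_analysis.
Set Implicit Arguments. Unset Strict Implicit. Unset Printing Implicit Defensive.
Import Order.TTheory GRing.Theory Num.Theory.
Local Open Scope classical_set_scope.
Local Open Scope ring_scope.

(* Points of R^d are functions 'I_d -> R; indices are integer row vectors
   in Z^e; a configuration is a function from Z^e to points (only its values
   on the finite index set I matter). *)

Section Defs.
Variable R : realType.

Definition enorm (d : nat) (v : 'I_d -> R) : R :=
  Num.sqrt (\sum_(j < d) v j ^+ 2).

Definition edist (d : nat) (v w : 'I_d -> R) : R := enorm (fun j => v j - w j).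

Definition cube (d : nat) : set ('I_d -> R) := [set w | forall j, 0 <= w j <= 1].

Definition lexlt (e : nat) (a b : 'rV[int]_e) : Prop :=
  exists k : 'I_e, (forall j : 'I_e, (j < k)%N -> a ord0 j = b ord0 j)
                   /\ (a ord0 k < b ord0 k)%R.

Definition Dset (d e : nat) (I : seq 'rV[int]_e) (delta : R) :
    set ('rV[int]_e -> 'I_d -> R) :=
  [set x | (forall i, i \in I -> cube (x i)) /\
           (forall i j, i \in I -> j \in I -> i <> j -> delta <= edist (x i) (x j))].

Definition cell (d e : nat) (I : seq 'rV[int]_e) (x : 'rV[int]_e -> 'I_d -> R)
    (i : 'rV[int]_e) : set ('I_d -> R) :=
  [set w | cube w /\
     forall k, k \in I -> k <> i ->
       edist (x i) w < edist (x k) w \/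
       (edist (x i) w = edist (x k) w /\ lexlt i k)].

Definition Uset (d e : nat) (I : seq 'rV[int]_e) (delta alpha : R)
    (x : 'rV[int]_e -> 'I_d -> R) (i : 'rV[int]_e) : set ('I_d -> R) :=
  [set w | cube w /\ exists y, Dset I delta y /\
      (forall j, j \in I -> j <> i -> y j = x j) /\
      edist (x i) (y i) < alpha /\
      ~ cell I y i w /\ cell I x i w].

(* Lebesgue (outer) measure on R^d: infimum of total volumes of countable
   covers by half-open boxes [a,b). It agrees with Lebesgue measure on
   Lebesgue-measurable sets. *)
Definition box (d : nat) (a b : 'I_d -> R) : set ('I_d -> R) :=
  [set w | forall j, a j <= w j < b j].

Definition boxvol (d : nat) (a b : 'I_d -> R) : R :=
  \prod_(j < d) Num.max (b j - a j) 0.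

Definition leb_outer (d : nat) (A : set ('I_d -> R)) : \bar R :=
  ereal_inf [set (\sum_(0 <= k <oo) (boxvol (ab.1 k) (ab.2 k))%:E)%E
            | ab in [set ab : (nat -> 'I_d -> R) * (nat -> 'I_d -> R) |
                      A `<=` \bigcup_k box (ab.1 k) (ab.2 k)]].

End Defs.

From Pilot Require Import Defs.
From HB Require Import structures.
From mathcomp Require Import all_boot all_order all_algebra.
From mathcomp Require Import all_classical all_reals all_analysis.
From mathcomp Require Import ring lra zify.
Import Order.TTheory GRing.Theory Num.Theory.
Set Implicit Arguments. Unset Strict Implicit.
Local Open Scope classical_set_scope.
Local Open Scope ring_scope.

(* A point of U^alpha_i(x) is at least as close to x_i as to every other centre,
   but once x_i is moved by less than alpha to y_i it is no closer to y_i than to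
   some x_k.  Moving a centre by less than alpha changes squared distances to
   points of the cube by less than beta = 2 alpha sqrt d, so the point lies in the
   shell |x_i - om|^2 <= |x_k - om|^2 < |x_i - om|^2 + beta, i.e. in a slab
   {om | w . om in J} with w = x_k - x_i and |J| = beta / 2.  Some coordinate w_j
   is at least delta / sqrt d, so the slab has extent at most alpha d / delta in
   direction j over each point of the other coordinates, and a grid of boxes
   covers it with total volume alpha d / delta + epsilon.  Summing over the
   |I| - 1 indices k <> i and using d <= 2 sqrt 2 ^ (d - 1) gives the bound. *)

Section BoxCover.
Variables (R : realType) (d : nat).
Implicit Types (A B : set ('I_d -> R)) (v : R).

Definition box_coverable A v : Prop :=
  exists M (lo hi : nat -> 'I_d -> R),
    A `<=` (fun w => exists2 k, (k < M)%N & box (lo k) (hi k) w) /\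
    \sum_(0 <= k < M) boxvol (lo k) (hi k) <= v.

Lemma boxvol_ge0 (a b : 'I_d -> R) : 0 <= boxvol a b.
Proof. by apply: prodr_ge0 => j _; rewrite le_max lexx orbT. Qed.

(* The cover is padded with the boxes [0, 0), which have volume 0 only if d > 0. *)
Lemma leb_outer_le_cover A v : (0 < d)%N -> box_coverable A v -> (leb_outer A <= v%:E)%E.
Proof.
move=> d_gt0 [M [lo [hi [AB Hv]]]].
pose lo' k := if (k < M)%N then lo k else (fun=> 0 : R).
pose hi' k := if (k < M)%N then hi k else (fun=> 0 : R).
apply: le_trans; first apply: ereal_inf_lbound.
  exists (lo', hi') => //= w /AB [k kM Hk]; exists k => //.
  by rewrite /lo' /hi' kM.
rewrite /= (nneseries_split 0 M); last by move=> k _; rewrite lee_fin boxvol_ge0.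
rewrite (@eseries0 _ _ (0 + M)%N) ?adde0; last first.
  move=> k; rewrite add0n => kM _; rewrite /lo' /hi' ltnNge kM /=.
  by rewrite /boxvol (bigD1 (Ordinal d_gt0)) //= subrr maxxx mul0r.
rewrite sumEFin lee_fin add0n; apply: le_trans Hv; rewrite le_eqVlt; apply/predU1l.
by apply: eq_big_nat => k /andP [_ kM]; rewrite /lo' /hi' kM.
Qed.

Lemma box_coverableS A B v : A `<=` B -> box_coverable B v -> box_coverable A v.
Proof.
by move=> AB [M [lo [hi [HB Hv]]]]; exists M, lo, hi; split=> // w /AB /HB.
Qed.

Lemma box_coverable_le A v v' : v <= v' -> box_coverable A v -> box_coverable A v'.
Proof.
move=> vv' [M [lo [hi [HA Hv]]]]; exists M, lo, hi; split=> //.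
exact: le_trans vv'.
Qed.

Lemma box_coverable_fin (T : finType) (lo hi : T -> 'I_d -> R) A :
  A `<=` (fun w => exists c, box (lo c) (hi c) w) ->
  box_coverable A (\sum_c boxvol (lo c) (hi c)).
Proof.
case: (pickP T) => [c0 _ | T0] AB; last first.
  exists 0%N, (fun _ _ => 0), (fun _ _ => 0); split; last first.
    by rewrite big_geq // sumr_ge0 // => c _; apply: boxvol_ge0.
  by move=> w /AB [c]; have := T0 c.
exists #|T|, (fun n => lo (nth c0 (enum T) n)), (fun n => hi (nth c0 (enum T) n)).
split; last by rewrite cardE -(big_nth c0 xpredT (fun c => boxvol (lo c) (hi c))) big_enum.
move=> w /AB [c Hc]; exists (index c (enum T)); first by rewrite cardE index_mem mem_enum.
by rewrite nth_index ?mem_enum.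
Qed.

Lemma box_coverableU A B v1 v2 :
  box_coverable A v1 -> box_coverable B v2 -> box_coverable (A `|` B) (v1 + v2).
Proof.
move=> [M1 [lo1 [hi1 [H1 S1]]]] [M2 [lo2 [hi2 [H2 S2]]]].
exists (M1 + M2)%N, (fun k => if (k < M1)%N then lo1 k else lo2 (k - M1)%N),
  (fun k => if (k < M1)%N then hi1 k else hi2 (k - M1)%N); split.
  move=> w [/H1 [k kM Hk]|/H2 [k kM Hk]].
    by exists k; [rewrite ltn_addr | rewrite kM].
  exists (k + M1)%N; first by rewrite addnC ltn_add2l.
  by rewrite ltnNge leq_addl /= addnK.
rewrite (@big_cat_nat _ _ _ M1) ?leq_addr //=; apply: lerD.
  apply: le_trans S1; rewrite le_eqVlt; apply/predU1l.
  by apply: eq_big_nat => k /andP [_ ->].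
rewrite -{1}(add0n M1) big_addn addKn.
apply: le_trans S2; rewrite le_eqVlt; apply/predU1l.
by apply: eq_big_nat => k _; rewrite ltnNge leq_addl /= addnK.
Qed.

Lemma box_coverable_bigcup (T : eqType) (F : T -> set ('I_d -> R)) v (s : seq T) :
  (forall k, k \in s -> box_coverable (F k) v) ->
  box_coverable [set w | exists2 k, k \in s & F k w] ((size s)%:R * v).
Proof.
elim: s => [|a s IH] Fv.
  exists 0%N, (fun _ _ => 0), (fun _ _ => 0); split; first by move=> w [].
  by rewrite big_geq // mul0r.
rewrite /= -addn1 natrD mulrDl mul1r addrC.
apply: box_coverableS (box_coverableU (Fv a (mem_head _ _)) (IH _)).
  move=> w [k]; rewrite in_cons => /orP [/eqP -> | ks] Fkw; first by left.
  by right; exists k.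
by move=> k ks; apply: Fv; rewrite in_cons ks orbT.
Qed.

End BoxCover.

Lemma truncn_cell (R : realType) (u t : R) : 0 < u -> 0 <= t ->
  (Num.truncn (t / u))%:R * u <= t < (Num.truncn (t / u)).+1%:R * u.
Proof.
move=> u_gt0 t_ge0; have := truncn_itv (divr_ge0 t_ge0 (ltW u_gt0)).
by rewrite ler_pdivlMr // ltr_pdivrMr.
Qed.

Definition slab (R : realType) (n : nat) (w : 'I_n -> R) (K h : R) :=
  [set om : 'I_n -> R | cube om /\ `|\sum_l w l * om l - K| <= h].

Section SlabGrid.
Variables (R : realType) (d N : nat) (j : 'I_d.+1) (w : 'I_d.+1 -> R) (K h : R).
Hypotheses (wj_neq0 : w j != 0) (h_ge0 : 0 <= h) (w_le1 : forall l, `|w l| <= 1).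

(* Cells of side [s] in the coordinates [l <> j], indexed up to [N.+1] so that the
   face [om l = 1] is covered; in coordinate [j], the interval of length [len]
   starting [r] below the slab's central hyperplane over the cell, cut into [N.+2]
   pieces so that all boxes have the same volume. *)
Let s : R := N.+1%:R^-1.
Let r := (h + s * d%:R) / `|w j|.
Let len := 2 * r + s.
Let k := len / N.+2%:R.
Let grid := {ffun 'I_d.+1 -> 'I_N.+2}.

Let s_gt0 : 0 < s. Proof. by rewrite invr_gt0 ltr0n. Qed.
Let grid_span : N.+2%:R * s = 1 + s.
Proof. by rewrite /s -natr1 mulrDl mulfV ?pnatr_eq0 // mul1r addrC. Qed.

Let r_ge0 : 0 <= r.
Proof. by rewrite divr_ge0 // addr_ge0 // mulr_ge0 // ltW. Qed.
Let k_gt0 : 0 < k.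
Proof. by rewrite divr_gt0 ?ltr0n // /len; have := r_ge0; have := s_gt0; lra. Qed.

Definition grid_center (c : grid) :=
  (K - \sum_(l < d.+1 | l != j) w l * ((c l)%:R * s)) / w j.

Definition grid_lo (c : grid) (l : 'I_d.+1) :=
  if l == j then grid_center c - r + (c j)%:R * k else (c l)%:R * s.

Definition grid_hi (c : grid) (l : 'I_d.+1) :=
  if l == j then grid_center c - r + (c j).+1%:R * k else (c l).+1%:R * s.

Lemma slab_sub_grid :
  slab w K h `<=` (fun om => exists c, box (grid_lo c) (grid_hi c) om).
Proof.
move=> om [om_cube om_slab].
have cell_lt l : (Num.truncn (om l / s) < N.+2)%N.
  have [om_ge0 om_le1] := andP (om_cube l).
  rewrite truncn_lt_nat ?ltr_pdivrMr ?divr_ge0 ?(ltW s_gt0) //.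
  by rewrite grid_span; have := s_gt0; lra.
pose c1 : grid := [ffun l => inord (Num.truncn (om l / s))].
have c1_cell l : (c1 l)%:R * s <= om l < (c1 l).+1%:R * s.
  by rewrite ffunE inordK //; apply: truncn_cell => //; have /andP [] := om_cube l.
set z := grid_center c1.
have om_z : `|om j - z| <= r.
  have dot_err : `|\sum_(l < d.+1 | l != j) w l * om l
                   - \sum_(l < d.+1 | l != j) w l * ((c1 l)%:R * s)| <= s * d%:R.
    rewrite -sumrB; apply: le_trans (ler_norm_sum _ _ _) _.
    apply: (@le_trans _ _ (\sum_(l < d.+1 | l != j) s)); last first.
      by rewrite sumr_const cardC1 card_ord mulr_natr.
    apply: ler_sum => l _; rewrite -mulrBr normrM.
    apply: le_trans (ler_wpM2r (normr_ge0 _) (w_le1 l)) _; rewrite mul1r.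
    have /andP [lo_om om_hi] := c1_cell l.
    rewrite -natr1 mulrDl mul1r in om_hi.
    by rewrite ger0_norm ?subr_ge0 //; lra.
  rewrite /r ler_pdivlMr ?normr_gt0 // mulrC -normrM.
  have -> : w j * (om j - z) = (\sum_l w l * om l - K)
      - (\sum_(l < d.+1 | l != j) w l * om l
         - \sum_(l < d.+1 | l != j) w l * ((c1 l)%:R * s)).
    by rewrite (bigD1 j) //= /z /grid_center mulrBr [w j * (_ / _)]mulrC divfK //; ring.
  exact: le_trans (ler_normB _ _) (lerD om_slab dot_err).
set y := om j - z + r.
have [y_ge0 y_lt] : 0 <= y /\ y < N.+2%:R * k.
  rewrite /k mulrC divfK ?pnatr_eq0 // /y /len.
  by move: om_z s_gt0; rewrite ler_norml => /andP [? ?] ?; split; lra.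
have cell_j : (Num.truncn (y / k) < N.+2)%N.
  by rewrite truncn_lt_nat ?ltr_pdivrMr // divr_ge0 // ltW.
pose c : grid := [ffun l => if l == j then inord (Num.truncn (y / k)) else c1 l].
have center_c : grid_center c = z.
  rewrite /z /grid_center; congr ((K - _) / _).
  by apply: eq_bigr => l /negbTE lj; rewrite ffunE lj.
exists c => l; rewrite /grid_lo /grid_hi.
case: eqP => [-> | /eqP lj]; last by rewrite ffunE (negbTE lj).
rewrite center_c ffunE eqxx inordK //.
by have := truncn_cell k_gt0 y_ge0; rewrite /y; lra.
Qed.

Lemma grid_boxvol c : boxvol (grid_lo c) (grid_hi c) = k * s ^+ d.
Proof.
rewrite /boxvol (bigD1 j) //= /grid_lo /grid_hi eqxx.
have -> : grid_center c - r + (c j).+1%:R * k - (grid_center c - r + (c j)%:R * k) = k.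
  by rewrite -natr1; ring.
rewrite max_l ?ltW //; congr (_ * _).
rewrite (eq_bigr (fun=> s)); first by rewrite prodr_const cardC1 card_ord.
move=> l /negbTE ->.
by rewrite -natr1 mulrDl mul1r addrAC subrr add0r max_l ?ltW.
Qed.

Lemma slab_grid_cover : box_coverable (slab w K h) (len * (1 + s) ^+ d).
Proof.
apply: box_coverable_le (box_coverable_fin slab_sub_grid).
rewrite (eq_bigr _ (fun c _ => grid_boxvol c)) sumr_const card_ffun !card_ord.
rewrite -grid_span -[_ *+ _]mulr_natr natrX exprS exprMn /k.
rewrite le_eqVlt; apply/predU1l; field.
by rewrite gt_eqF //; have := ler0n R N; lra.
Qed.

End SlabGrid.

Lemma expr1D_le (R : realFieldType) (s : R) (n : nat) :
  0 <= s <= 1 -> (1 + s) ^+ n <= 1 + s * (2 ^+ n - 1).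
Proof.
move=> /andP [s_ge0 s_le1]; elim: n => [|n IHn]; first by rewrite !expr0 subrr mulr0 addr0.
have pow_ge1 : 1 <= 2 ^+ n :> R by apply: exprn_ege1; lra.
rewrite exprSr [2 ^+ n.+1]exprS.
apply: le_trans (ler_wpM2r (_ : 0 <= 1 + s) IHn) _; first lra.
have : s * s * (2 ^+ n - 1) <= s * (2 ^+ n - 1) by rewrite ler_wpM2r //; nra.
nra.
Qed.

Lemma slab_cover (R : realType) (d : nat) (j : 'I_d.+1) (w : 'I_d.+1 -> R)
    (K h eps : R) :
  w j != 0 -> 0 <= h -> (forall l, `|w l| <= 1) -> 0 < eps ->
  box_coverable (slab w K h) (2 * h / `|w j| + eps).
Proof.
move=> wj_neq0 h_ge0 w_le1 eps_gt0.
have wj_gt0 : 0 < `|w j| by rewrite normr_gt0.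
set a := 2 * h / `|w j|; set C := 2 * d%:R / `|w j| + 1; set P : R := 2 ^+ d - 1.
have a_ge0 : 0 <= a by rewrite divr_ge0 ?mulr_ge0 // ltW.
have C_ge0 : 0 <= C by rewrite addr_ge0 // divr_ge0 ?mulr_ge0 // ltW.
have P_ge0 : 0 <= P by rewrite subr_ge0 exprn_ege1 //; lra.
set G := C + a * P + C * P.
have G_ge0 : 0 <= G by rewrite !addr_ge0 // mulr_ge0.
set N := Num.truncn (G / eps); set s : R := N.+1%:R^-1.
have s_gt0 : 0 < s by rewrite invr_gt0 ltr0n.
have s_le1 : s <= 1 by rewrite invf_le1 ?ltr0n // ler1n.
have sG : s * G < eps.
  by rewrite mulrC ltr_pdivrMr ?ltr0n // mulrC -ltr_pdivrMr // truncnS_gt.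
apply: box_coverable_le _ (slab_grid_cover N K wj_neq0 h_ge0 w_le1).
have -> : 2 * ((h + s * d%:R) / `|w j|) + s = a + s * C.
  by rewrite /a /C; field; rewrite gt_eqF.
have pow := expr1D_le d (introT andP (conj (ltW s_gt0) s_le1)); rewrite -/P in pow.
apply: le_trans (ler_pM _ _ (lexx (a + s * C)) pow) _.
- by rewrite addr_ge0 // mulr_ge0 // ltW.
- by rewrite exprn_ge0 //; lra.
have : s * s * (C * P) <= s * (C * P) by rewrite ler_wpM2r ?mulr_ge0 //; nra.
have : s * (a * P) + s * (C * P) + s * C = s * G by rewrite /G; ring.
nra.
Qed.

Section SquaredDistance.
Variables (R : realType) (n : nat).
Implicit Types (a b c e om : 'I_n -> R).

Definition sqdist a b : R := \sum_l (a l - b l) ^+ 2.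

Lemma sqdist_ge0 a b : 0 <= sqdist a b.
Proof. by apply: sumr_ge0 => l _; apply: sqr_ge0. Qed.

Lemma sqdistC a b : sqdist a b = sqdist b a.
Proof. by apply: eq_bigr => l _; rewrite -sqrrN opprB. Qed.

Lemma ler_edist a b c e : (Defs.edist a b <= Defs.edist c e) = (sqdist a b <= sqdist c e).
Proof. by rewrite ler_sqrt // sqdist_ge0. Qed.

Lemma edist_lt a b (r : R) : 0 < r -> (Defs.edist a b < r) = (sqdist a b < r ^+ 2).
Proof.
by move=> r_gt0; rewrite -{1}(ger0_norm (ltW r_gt0)) -sqrtr_sqr ltr_sqrt ?exprn_gt0.
Qed.

Lemma edist_ge a b (r : R) : 0 <= r -> (r <= Defs.edist a b) = (r ^+ 2 <= sqdist a b).
Proof. by move=> r_ge0; rewrite -{1}(ger0_norm r_ge0) -sqrtr_sqr ler_sqrt ?sqdist_ge0. Qed.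

Lemma sum_mul_le_amgm (t : R) (u v : 'I_n -> R) : 0 < t ->
  \sum_l u l * v l <= t / 2 * \sum_l u l ^+ 2 + (2 * t)^-1 * \sum_l v l ^+ 2.
Proof.
move=> t_gt0; rewrite !mulr_sumr -big_split /=; apply: ler_sum => l _.
have : 0 <= (t * u l - v l) ^+ 2 / (2 * t) by rewrite divr_ge0 ?sqr_ge0 // ltW ?mulr_gt0.
have -> : (t * u l - v l) ^+ 2 / (2 * t)
    = t / 2 * u l ^+ 2 + (2 * t)^-1 * v l ^+ 2 - u l * v l.
  by field; rewrite gt_eqF.
by rewrite subr_ge0.
Qed.

(* Moving the centre from [a] to [b] changes squared distances to points of the
   cube by [(b - a) . (a + b - 2 om)]; the second factor has norm at most
   [2 sqrt n], and AM-GM with the right weight turns this into a strict bound. *)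
Lemma sqdist_shift_lt a b om (alpha : R) : (0 < n)%N ->
  cube a -> cube b -> cube om -> Defs.edist a b < alpha ->
  sqdist b om < sqdist a om + 2 * alpha * Num.sqrt n%:R.
Proof.
move=> n_gt0 a_cube b_cube om_cube ab_lt.
have alpha_gt0 : 0 < alpha by apply: le_lt_trans ab_lt; apply: sqrtr_ge0.
have sn_gt0 : 0 < Num.sqrt n%:R :> R by rewrite sqrtr_gt0 ltr0n.
set sn := Num.sqrt n%:R.
have sn2 : sn ^+ 2 = n%:R by rewrite sqr_sqrtr // ler0n.
pose t := 2 * sn / alpha.
have t_gt0 : 0 < t by rewrite divr_gt0 ?mulr_gt0.
have := sum_mul_le_amgm (fun l => b l - a l) (fun l => a l + b l - 2 * om l) t_gt0.
have -> : \sum_l (b l - a l) * (a l + b l - 2 * om l) = sqdist b om - sqdist a om.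
  by rewrite /sqdist -sumrB; apply: eq_bigr => l _; ring.
have sqdist_ba : sqdist b a < alpha ^+ 2.
  by rewrite sqdistC -edist_lt.
have vsq : \sum_l (a l + b l - 2 * om l) ^+ 2 <= 4 * n%:R.
  apply: le_trans (_ : \sum_(l < n) 4 <= _); last by rewrite sumr_const card_ord mulr_natr.
  apply: ler_sum => l _.
  have := a_cube l; have := b_cube l; have := om_cube l.
  move=> /andP [? ?] /andP [? ?] /andP [? ?]; nra.
have first_lt : t / 2 * sqdist b a < alpha * sn.
  rewrite (_ : alpha * sn = t / 2 * alpha ^+ 2); first by rewrite ltr_pM2l // divr_gt0.
  by rewrite /t; field; rewrite gt_eqF.
have second_le : (2 * t)^-1 * \sum_l (a l + b l - 2 * om l) ^+ 2 <= alpha * sn.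
  have inv_ge0 : 0 <= (2 * t)^-1 by rewrite invr_ge0 mulr_ge0 // ltW.
  apply: le_trans (ler_wpM2l inv_ge0 vsq) _.
  rewrite (_ : _ * (4 * n%:R) = alpha * sn) //.
  by rewrite /t -sn2; field; rewrite !gt_eqF.
rewrite (_ : sqdist b a = \sum_l (b l - a l) ^+ 2) // in first_lt.
lra.
Qed.

Lemma exists_coord_ge a b (r : R) : (0 < n)%N -> 0 < r -> r <= Defs.edist a b ->
  exists l, r / Num.sqrt n%:R <= `|a l - b l|.
Proof.
move=> n_gt0 r_gt0; rewrite edist_ge ?(ltW r_gt0) // => r_le.
have sn_gt0 : 0 < Num.sqrt n%:R :> R by rewrite sqrtr_gt0 ltr0n.
apply: contrapT => /forallNP all_lt.
suff /(le_lt_trans r_le) : sqdist a b < r ^+ 2 by rewrite ltxx.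
apply: lt_le_trans (_ : \sum_(l < n) (r / Num.sqrt n%:R) ^+ 2 <= _).
  apply: ltr_sum; first by apply/hasP; exists (Ordinal n_gt0); rewrite ?mem_index_enum.
  move=> l _; rewrite -[(a l - b l) ^+ 2]real_normK ?num_real //.
  rewrite ltr_pXn2r ?nnegrE ?normr_ge0 //; last by rewrite divr_ge0 // ltW.
  by rewrite ltNge; apply/negP; apply: all_lt.
rewrite sumr_const card_ord expr_div_n sqr_sqrtr ?ler0n //.
by rewrite -[r ^+ 2 / _ *+ _]mulr_natr divfK // pnatr_eq0 -lt0n.
Qed.

End SquaredDistance.

Definition shell (R : realType) (n : nat) (a b : 'I_n -> R) (beta : R) :=
  [set om : 'I_n -> R | cube om /\ sqdist a om <= sqdist b om < sqdist a om + beta].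

(* [|b - om|^2 - |a - om|^2] is affine in [om], with linear part [-2 (b - a) . om]. *)
Lemma shell_sub_slab (R : realType) (n : nat) (a b : 'I_n -> R) (beta : R) :
  shell a b beta `<=`
  slab (fun l => b l - a l) ((\sum_l (b l ^+ 2 - a l ^+ 2)) / 2 - beta / 4) (beta / 4).
Proof.
move=> om [om_cube /andP [near_a near_b]]; split => //=.
set Q := \sum_l (b l ^+ 2 - a l ^+ 2).
have -> : \sum_l (b l - a l) * om l = (Q - (sqdist b om - sqdist a om)) / 2.
  by rewrite /Q /sqdist -!sumrB mulr_suml; apply: eq_bigr => l _; field.
by rewrite ler_norml; apply/andP; split; lra.
Qed.

Lemma shell_cover (R : realType) (d : nat) (a b : 'I_d.+1 -> R) (delta beta eps : R) :
  cube a -> cube b -> 0 < delta -> delta <= Defs.edist a b -> 0 <= beta -> 0 < eps ->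
  box_coverable (shell a b beta) (beta * Num.sqrt d.+1%:R / (2 * delta) + eps).
Proof.
move=> a_cube b_cube delta_gt0 delta_le beta_ge0 eps_gt0.
have sD_gt0 : 0 < Num.sqrt d.+1%:R :> R by rewrite sqrtr_gt0 ltr0n.
have [j wj_ge] := exists_coord_ge (ltn0Sn d) delta_gt0 delta_le.
rewrite distrC in wj_ge.
have wj_gt0 : 0 < `|b j - a j| by apply: lt_le_trans wj_ge; rewrite divr_gt0.
have w_le1 l : `|b l - a l| <= 1.
  by have := a_cube l; have := b_cube l; move=> /andP [? ?] /andP [? ?]; rewrite ler_norml; lra.
apply: box_coverableS (@shell_sub_slab _ _ a b beta) _.
apply: box_coverable_le _ (slab_cover (j := j) _ _ _ w_le1 eps_gt0); first last.
- by rewrite divr_ge0.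
- by rewrite -normr_gt0.
have inv_le : `|b j - a j|^-1 <= Num.sqrt d.+1%:R / delta.
  by rewrite -invf_div lef_pV2 ?posrE ?divr_gt0.
rewrite lerD2r; apply: le_trans (ler_wpM2l _ inv_le) _; first by rewrite mulr_ge0 // divr_ge0.
by rewrite le_eqVlt; apply/predU1l; field; rewrite gt_eqF.
Qed.

Lemma Uset_sub_shells (R : realType) (n e : nat) (I : seq 'rV[int]_e)
    (delta alpha : R) (x : 'rV[int]_e -> 'I_n -> R) (i : 'rV[int]_e) :
  (0 < n)%N -> uniq I -> Dset I delta x -> i \in I ->
  Uset I delta alpha x i `<=`
  [set om | exists2 k, k \in rem i I & shell (x i) (x k) (2 * alpha * Num.sqrt n%:R) om].
Proof.
move=> n_gt0 I_uniq [x_cube _] iI om [om_cube [y [[y_cube _] [yx [xy_lt [y_not x_cell]]]]]].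
have [k kI [ki k_closer]] : exists2 k, k \in I & k <> i /\
    ~ (Defs.edist (y i) om < Defs.edist (y k) om \/
       Defs.edist (y i) om = Defs.edist (y k) om /\ lexlt i k).
  apply: contrapT => no_k; apply: y_not; split => // k kI ki.
  by apply: contrapT => k_closer; apply: no_k; exists k.
have yk : y k = x k by apply: yx.
have x_near : sqdist (x i) om <= sqdist (x k) om.
  by rewrite -ler_edist; case: (x_cell.2 k kI ki) => [/ltW | [-> _]].
have y_far : sqdist (x k) om <= sqdist (y i) om.
  by rewrite -ler_edist -yk leNgt; apply/negP => lt_ki; apply: k_closer; left.
exists k; first by rewrite (mem_rem_uniq _ I_uniq) inE kI andbT; apply/eqP.
split => //; rewrite x_near /=.
exact: le_lt_trans y_far (sqdist_shift_lt n_gt0 (x_cube i iI) (y_cube i iI) om_cube xy_lt).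
Qed.

Lemma Uset_cover (R : realType) (d e : nat) (I : seq 'rV[int]_e) (delta alpha eps : R)
    (x : 'rV[int]_e -> 'I_d.+1 -> R) (i : 'rV[int]_e) :
  uniq I -> i \in I -> 0 < delta -> 0 < alpha -> Dset I delta x -> 0 < eps ->
  box_coverable (Uset I delta alpha x i)
    (((size I)%:R - 1) * (alpha * d.+1%:R / delta + eps)).
Proof.
move=> I_uniq iI delta_gt0 alpha_gt0 Dx eps_gt0.
apply: box_coverableS (Uset_sub_shells (alpha := alpha) (ltn0Sn d) I_uniq Dx iI) _.
have -> : (size I)%:R - 1 = (size (rem i I))%:R :> R.
  by rewrite size_rem // -subn1 natrB // lt0n; apply/eqP => /size0nil I0; rewrite I0 in iI.
apply: box_coverable_bigcup => k; rewrite (mem_rem_uniq _ I_uniq) inE => /andP [/eqP ki kI].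
have [x_cube x_sep] := Dx.
apply: box_coverable_le _ (shell_cover (x_cube i iI) (x_cube k kI) delta_gt0
  (x_sep i k iI kI (nesym ki)) _ eps_gt0); last by rewrite !mulr_ge0 ?sqrtr_ge0 // ltW.
have -> : 2 * alpha * Num.sqrt d.+1%:R * Num.sqrt d.+1%:R = 2 * alpha * Num.sqrt d.+1%:R ^+ 2.
  by ring.
by rewrite sqr_sqrtr ?ler0n // lerD2r le_eqVlt; apply/predU1l; field; rewrite gt_eqF.
Qed.

Lemma leq_sqrS_exp2 (d : nat) : (d.+1 ^ 2 <= 4 * 2 ^ d)%N.
Proof.
elim: d => [//|d IHd]; have := ltn_expl d (isT : (1 < 2)%N).
by rewrite !expnS !expn0 !muln1 in IHd *; lia.
Qed.

Lemma natS_le_sqrt2_exp (R : realType) (d : nat) : d.+1%:R <= 2 * Num.sqrt 2 ^+ d :> R.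
Proof.
have rhs_ge0 : 0 <= 2 * Num.sqrt 2 ^+ d :> R by rewrite mulr_ge0 ?exprn_ge0.
rewrite -(ler_pXn2r (isT : (0 < 2)%N)) ?nnegrE ?ler0n //.
rewrite exprMn -exprM mulnC exprM sqr_sqrtr ?ler0n // -!natrX -natrM ler_nat.
exact: leq_sqrS_exp2.
Qed.

Theorem lemma1 (R : realType) (d e : nat) (I : seq 'rV[int]_e)
    (delta alpha : R) (i : 'rV[int]_e) :
  (1 <= d)%N -> (1 <= e)%N -> (e <= d)%N -> uniq I -> (1 < size I)%N ->
  0 < delta -> 0 < alpha -> alpha < delta / 2 -> i \in I ->
  (ereal_sup [set leb_outer (Uset I delta alpha x i) | x in @Dset R d e I delta]
   < (((size I)%:R - 1) * (2 * alpha / delta + alpha) * Num.sqrt 2 ^+ (d - 1))%:E)%E.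
Proof.
case: d => [//|d] _ _ _ I_uniq I_gt1 delta_gt0 alpha_gt0 _ iI; rewrite subn1 /=.
set D : R := d.+1%:R.
apply: (@le_lt_trans _ _ (((size I)%:R - 1) * (alpha * D / delta + alpha / 2))%:E).
  apply: ge_ereal_sup => _ [x Dx <-].
  apply: leb_outer_le_cover (ltn0Sn d) (Uset_cover I_uniq iI delta_gt0 alpha_gt0 Dx _).
  by rewrite divr_gt0.
rewrite lte_fin -[_ * _ * Num.sqrt 2 ^+ d]mulrA ltr_pM2l ?subr_gt0 ?ltr1n //.
have sqrt2_pow_ge1 : 1 <= Num.sqrt 2 ^+ d :> R.
  by apply: exprn_ege1; rewrite -{1}sqrtr1 ler_sqrt // ler1n.
have : alpha / delta * D <= alpha / delta * (2 * Num.sqrt 2 ^+ d).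
  by apply: ler_wpM2l; [rewrite divr_ge0 // ltW | exact: natS_le_sqrt2_exp].
have : alpha <= alpha * Num.sqrt 2 ^+ d by rewrite ler_peMr // ltW.
have -> : alpha * D / delta = alpha / delta * D by ring.
have -> : (2 * alpha / delta + alpha) * Num.sqrt 2 ^+ d
    = alpha / delta * (2 * Num.sqrt 2 ^+ d) + alpha * Num.sqrt 2 ^+ d by ring.
lra.
Qed.
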